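(* Let $\vartheta_2,\vartheta_3,\vartheta_4,\eta$ be functions of $\tau$ (with $\vartheta_2\vartheta_3\vartheta_4\neq0$) satisfying $$\frac{d\vartheta_2}{d\tau}=\frac{i}{\pi}\Big\{\eta+\frac{\pi^2}{12}(\vartheta_3^4+\vartheta_4^4)\Big\}\vartheta_2,\quad \frac{d\vartheta_4}{d\tau}=\frac{i}{\pi}\Big\{\eta-\frac{\pi^2}{12}(\vartheta_2^4+\vartheta_3^4)\Big\}\vartheta_4,$$ $$\frac{d\vartheta_3}{d\tau}=\frac{i}{\pi}\Big\{\eta+\frac{\pi^2}{12}(\vartheta_2^4-\vartheta_4^4)\Big\}\vartheta_3,\quad \frac{d\eta}{d\tau}=\frac{i}{\pi}\Big\{2\eta^2-\frac{\pi^4}{12^2}(\vartheta_2^8+\vartheta_3^8+\vartheta_4^8)\Big\}.$$ Then the quantity $\mathfrak{A}^4$ defined by $(\mathfrak{A}^4-1)\vartheta_2^4\vartheta_3^4\vartheta_4^4=(\vartheta_3^4-\vartheta_2^4-\vartheta_4^4)^3$ is constant in $\tau$; i.e. this relation is an algebraic integral of the system. *)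

From mathcomp Require Import all_boot all_order all_algebra.
From mathcomp Require Import all_classical all_reals all_analysis.
From mathcomp Require Export complex.
Import Order.TTheory GRing.Theory Num.Theory.
Import numFieldNormedType.Exports.
Local Open Scope ring_scope.
Set Implicit Arguments.
Unset Strict Implicit.
Unset Printing Implicit Defensive.

(* The complex plane over a real type R, viewed as a normed module over
   itself (so that complex derivatives make sense). *)
Notation CC R := ((R[i])^o).

From mathcomp Require Import all_boot all_order all_algebra.
From mathcomp Require Import all_classical all_reals all_analysis.
From mathcomp Require Import complex ring lra.
Import Order.TTheory GRing.Theory Num.Theory.
Import numFieldNormedType.Exports.
Local Open Scope ring_scope.
Local Open Scope classical_set_scope.
Set Implicit Arguments.
Unset Strict Implicit.
Unset Printing Implicit Defensive.

(* Put y_k = th_k^4 and let d_k be the brace multiplying th_k in the system, so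
   that y_k' = 4 d_k y_k.  The logarithmic derivative of
   A^4 - 1 = (y3 - y2 - y4)^3 / (y2 y3 y4) is
   4 (3 (y3 d3 - y2 d2 - y4 d4) / (y3 - y2 - y4) - (d2 + d3 + d4)), which vanishes
   identically: the eta terms agree and the pi^2/12 terms cancel on each side.  A function with zero complex
   derivative on an open connected set is constant: along segments by the real
   mean value theorem applied to its real and imaginary parts, hence locally on
   balls, hence globally. *)

Lemma locally_constant_connected (T : topologicalType) (U : Type)
    (D : set T) (F : T -> U) :
  connected D -> (forall t, D t -> \forall u \near t, F u = F t) ->
  forall x y, D x -> D y -> F x = F y.
Proof.
move=> cD Floc x y Dx Dy; apply: contrapT => Fxy.
pose A := [set t | D t /\ F t = F x].
pose B := [set t | D t /\ F t <> F x].
move/connectedP: cD => /(_ (fun b => if b then B else A)); apply; split.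
- by case; [exists y; split=> // /esym | exists x].
- apply/seteqP; split=> [t Dt|t [[]|[]]//].
  by have [Ftx|Ftx] := pselect (F t = F x); [left|right].
- split; apply/seteqP; split=> // t.
  + move=> [clAt [Dt Ftx]]; have [u [[_ Fux] Fut]] := clAt _ (Floc t Dt).
    by apply: Ftx; rewrite -Fut.
  + move=> [[Dt Ftx] clBt]; have [u [[_ Fux] Fut]] := clBt _ (Floc t Dt).
    by apply: Fux; rewrite Fut.
Qed.

Section ComplexZeroDerivative.
Variable R : realType.
Local Notation C := (CC R).
Local Notation normc := (@Normc.normc R).

Lemma normC_normc (x : C) : `|x| = (normc x)%:C%C. Proof. by []. Qed.

Lemma normc_ge0 (x : C) : 0 <= normc x.
Proof. by case: x => a b; exact: sqrtr_ge0. Qed.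

Lemma normc_real (h : R) : normc h%:C%C = `|h|.
Proof. by rewrite /Normc.normc /= expr0n /= addr0 sqrtr_sqr. Qed.

Lemma normc_ge_absRe (x : C) : `|complex.Re x| <= normc x.
Proof. by have := normc_ge_Re x; rewrite normC_normc lecR. Qed.

Lemma gt0_complex_real (r : C) : 0 < r -> r = (complex.Re r)%:C%C /\ 0 < complex.Re r.
Proof. by case: r => a b; rewrite ltcE /= => /andP[/eqP -> ->]. Qed.

Lemma is_derive0_normc_le (f : C -> C) (w : C) : is_derive w 1 f 0 ->
  forall e : R, 0 < e -> exists2 d : R, 0 < d &
    forall u : C, u != 0 -> normc u < d -> normc (f (u + w) - f w) <= e * normc u.
Proof.
move=> [fd df0] e e0.
have : (fun u : C => u^-1 *: (f (u *: 1 + w) - f w)) @ 0^' --> 'D_1 f w := fd.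
rewrite df0 => /cvgr0Pnorm_le => /(_ e%:C%C); rewrite ltcR => /(_ e0).
rewrite near_withinE => /nbhs_ballP [r /gt0_complex_real [-> r0] Hr].
exists (complex.Re r) => // u u0 ud.
have /Hr /(_ u0) : ball (0 : C) (complex.Re r)%:C%C u.
  by rewrite -ball_normE /= sub0r normrN normC_normc ltcR.
rewrite /GRing.scale /= mulr1 normrM normfV ler_pdivrMl ?normr_gt0 //.
by rewrite !normC_normc -rmorphM /= lecR mulrC.
Qed.

Lemma is_derive0_line_normc_le (f : C -> C) (w v : C) : is_derive w 1 f 0 ->
  forall e : R, 0 < e ->
  \forall h \near (0 : R)^', normc (f (h%:C%C * v + w) - f w) <= e * `|h|.
Proof.
move=> fd e e0.
have v1_gt0 : 0 < normc v + 1 by rewrite ltr_wpDl ?normc_ge0.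
have [d d0 flat] := is_derive0_normc_le fd (divr_gt0 e0 v1_gt0).
near=> h.
have [->|v0] := eqVneq v 0.
  by rewrite mulr0 add0r subrr Normc.normc0 pmulr_rge0.
have hv0 : h%:C%C * v != 0.
  rewrite mulf_neq0 // (inj_eq (@complexI _)).
  by near: h; exact: nbhs_dnbhs_neq.
have hd : `|h| * (normc v + 1) < d.
  by rewrite -ltr_pdivlMr //; near: h; apply: dnbhs0_lt; rewrite divr_gt0.
have := flat _ hv0; rewrite Normc.normcM normc_real => /(_ _)/le_trans; apply.
  by apply: le_lt_trans hd; rewrite ler_wpM2l ?lerDl.
rewrite [leLHS](_ : _ = e * `|h| * (normc v / (normc v + 1))); last by ring.
by apply: ler_piMr; [rewrite pmulr_rge0 | rewrite ler_pdivrMr // mul1r lerDl].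
Unshelve. all: by end_near.
Qed.

Lemma is_derive0_line (f : C -> C) (z v c : C) (s : R) :
  is_derive (z + s%:C%C * v) 1 f 0 ->
  is_derive s 1 (fun r : R => complex.Re (c * f (z + r%:C%C * v))) 0.
Proof.
move=> fd; set g := fun r : R => _.
have c1_gt0 : 0 < normc c + 1 by rewrite ltr_wpDl ?normc_ge0.
suff quot0 : (fun h : R => h^-1 *: (g (h *: 1 + s) - g s)) @ 0^' --> 0.
  by apply: DeriveDef; [apply/cvg_ex; exists 0 | exact: cvg_lim quot0].
apply/cvgr0Pnorm_le => e e0; near=> h.
have h0 : h != 0 by near: h; exact: nbhs_dnbhs_neq.
have flat : normc (f (h%:C%C * v + (z + s%:C%C * v)) - f (z + s%:C%C * v))
    <= e / (normc c + 1) * `|h|.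
  by near: h; apply: is_derive0_line_normc_le; rewrite // divr_gt0.
rewrite /g /GRing.scale /= mulr1 rmorphD /= mulrDl addrCA -raddfB -mulrBr.
rewrite normrM normfV ler_pdivrMl ?normr_gt0 //.
apply: (le_trans (normc_ge_absRe _)); rewrite Normc.normcM.
apply: le_trans (ler_wpM2l (normc_ge0 c) flat) _.
rewrite [leLHS](_ : _ = `|h| * e * (normc c / (normc c + 1))); last by ring.
apply: ler_piMr; first exact: mulr_ge0 (normr_ge0 h) (ltW e0).
by rewrite ler_pdivrMr // mul1r lerDl.
Unshelve. all: by end_near.
Qed.

Lemma is_derive0_segment (f : C -> C) (z v : C) :
  (forall s : R, 0 <= s <= 1 -> is_derive (z + s%:C%C * v) 1 f 0) ->
  f (z + v) = f z.
Proof.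
move=> fd.
have ReM_eq c : complex.Re (c * f (z + v)) = complex.Re (c * f z).
  set g := fun s : R => complex.Re (c * f (z + s%:C%C * v)).
  case: (@MVT_segment R g (fun _ => 0) 0 1 ler01).
  - by move=> s; rewrite in_itv /= => /andP[s0 s1]; apply/is_derive0_line/fd; rewrite !ltW.
  - apply: continuous_in_subspaceT => s; rewrite inE /= in_itv /= => s01.
    have [gd _] := is_derive0_line c (fd s s01).
    exact/differentiable_continuous/derivable1_diffP.
  by move=> s _ /eqP; rewrite mul0r subr_eq0 /g rmorph1 rmorph0 mul1r mul0r addr0 => /eqP.
move: (ReM_eq 1) (ReM_eq (- 'i%C)); rewrite !mul1r.
by case: (f (z + v)) => a1 a2; case: (f z) => b1 b2 /= -> E; congr (_ +i* _)%C; lra.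
Qed.

Lemma is_derive0_locally_constant (D : set C) (F : C -> C) : open D ->
  (forall t, D t -> is_derive t 1 F 0) ->
  forall t, D t -> \forall u \near t, F u = F t.
Proof.
move=> oD dF t /oD /nbhs_ballP [r r0 rD].
near=> u.
have -> : u = t + (u - t) by rewrite addrC subrK.
apply: is_derive0_segment => s /andP[s0 s1]; apply/dF/rD.
rewrite -ball_normE /= opprD addrA subrr sub0r normrN normrM.
apply: le_lt_trans (_ : `|u - t| < r); last first.
  by rewrite distrC; near: u; apply: nbhsx_ballx.
rewrite ler_piMl // normC_normc normc_real ger0_norm //.
by rewrite -[1](rmorph1 (@real_complex R)) lecR.
Unshelve. all: by end_near.
Qed.

End ComplexZeroDerivative.

Section DeriveScalarFunctions.
Variables (K : numFieldType) (V : normedModType K).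
Implicit Types (f : V -> K) (x v : V).

Lemma is_deriveVf f x v df : f x != 0 -> is_derive x v f df ->
  is_derive x v (fun y => (f y)^-1) (- (f x) ^- 2 * df).
Proof.
move=> fx0 [fd <-]; apply: DeriveDef; first exact: derivableV.
by rewrite deriveV.
Qed.

Lemma is_deriveX_proportional f x v n d : is_derive x v f (d * f x) ->
  is_derive x v (f ^+ n) ((n%:R * d) * f x ^+ n).
Proof.
move=> fd; apply: is_derive_eq (is_deriveX n fd) _.
case: n => [|n]; first by rewrite !mul0r scale0r.
by rewrite /GRing.scale /= exprS; ring.
Qed.

End DeriveScalarFunctions.

Definition frakA4 {T : Type} {K : fieldType} (th2 th3 th4 : T -> K) (t : T) : K :=
  1 + (th3 t ^+ 4 - th2 t ^+ 4 - th4 t ^+ 4) ^+ 3 / (th2 t ^+ 4 * th3 t ^+ 4 * th4 t ^+ 4).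

Lemma is_derive_frakA4_eq0 (K : numFieldType) (V : normedModType K)
    (th2 th3 th4 : V -> K) (x v : V) (d2 d3 d4 : K) :
  th2 x * th3 x * th4 x != 0 ->
  is_derive x v th2 (d2 * th2 x) -> is_derive x v th3 (d3 * th3 x) ->
  is_derive x v th4 (d4 * th4 x) ->
  3%:R * (th3 x ^+ 4 * d3 - th2 x ^+ 4 * d2 - th4 x ^+ 4 * d4)
    = (th3 x ^+ 4 - th2 x ^+ 4 - th4 x ^+ 4) * (d2 + d3 + d4) ->
  is_derive x v (frakA4 th2 th3 th4) 0.
Proof.
rewrite !mulf_eq0 !negb_or => /andP[/andP[nz2 nz3] nz4] D2 D3 D4 logder.
have Y2 := is_deriveX_proportional 4 D2.
have Y3 := is_deriveX_proportional 4 D3.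
have Y4 := is_deriveX_proportional 4 D4.
have P0 : (th2 ^+ 4 * th3 ^+ 4 * th4 ^+ 4) x != 0 by rewrite /= !mulf_neq0 ?expf_neq0.
have dA := is_deriveD (is_derive_cst (1 : K) x v)
  (is_deriveM (is_deriveX 3 (is_deriveB (is_deriveB Y3 Y2) Y4))
              (is_deriveVf P0 (is_deriveM (is_deriveM Y2 Y3) Y4))).
apply: (is_derive_eq dA).
rewrite /GRing.scale /= !(exprfctE, mulrfctE, opprfctE, addrfctE) /= add0r.
set N := _ - _ - th4 x ^+ 4.
transitivity (4%:R * N ^+ 2 / (th2 x ^+ 4 * th3 x ^+ 4 * th4 x ^+ 4) *
  (3%:R * (th3 x ^+ 4 * d3 - th2 x ^+ 4 * d2 - th4 x ^+ 4 * d4) - N * (d2 + d3 + d4))).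
  by rewrite /N; field; rewrite nz2 nz3 nz4.
by rewrite logder subrr mulr0.
Qed.

Theorem proposition7p3 (R : realType) (D : set (CC R))
  (th2 th3 th4 eta : CC R -> CC R)
  (hDopen : open D) (hDconn : connected D)
  (hnz : forall t, D t -> th2 t * th3 t * th4 t != 0)
  (h2 : forall t, D t -> is_derive t 1 th2
     ('i / (real_complex R pi) * (eta t + (real_complex R pi) ^+ 2 / 12%:R * (th3 t ^+ 4 + th4 t ^+ 4)) * th2 t))
  (h4 : forall t, D t -> is_derive t 1 th4
     ('i / (real_complex R pi) * (eta t - (real_complex R pi) ^+ 2 / 12%:R * (th2 t ^+ 4 + th3 t ^+ 4)) * th4 t))
  (h3 : forall t, D t -> is_derive t 1 th3
     ('i / (real_complex R pi) * (eta t + (real_complex R pi) ^+ 2 / 12%:R * (th2 t ^+ 4 - th4 t ^+ 4)) * th3 t))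
  (he : forall t, D t -> is_derive t 1 eta
     ('i / (real_complex R pi) * (2%:R * eta t ^+ 2
        - (real_complex R pi) ^+ 4 / (12%:R ^+ 2) * (th2 t ^+ 8 + th3 t ^+ 8 + th4 t ^+ 8)))) :
  exists A4 : CC R, forall t, D t ->
    (A4 - 1) * (th2 t ^+ 4 * th3 t ^+ 4 * th4 t ^+ 4)
      = (th3 t ^+ 4 - th2 t ^+ 4 - th4 t ^+ 4) ^+ 3.
Proof.
have dA4 t : D t -> is_derive t 1 (frakA4 th2 th3 th4) 0.
  by move=> Dt; apply: is_derive_frakA4_eq0 (hnz t Dt) (h2 t Dt) (h3 t Dt) (h4 t Dt) _; ring.
have [[t0 Dt0]|noD] := pselect (exists t, D t); last first.
  by exists 0 => t Dt; case: noD; exists t.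
exists (frakA4 th2 th3 th4 t0) => t Dt.
have := locally_constant_connected hDconn (is_derive0_locally_constant hDopen dA4) Dt Dt0.
move: (hnz t Dt); rewrite !mulf_eq0 !negb_or => /andP[/andP[nz2 nz3] nz4].
by rewrite /frakA4 => <-; rewrite addrC addKr divfK // !mulf_neq0 ?expf_neq0.
Qed.
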